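(* Let $M_I$ be a prefactor system and let $M$ be a limit of $M_I$, and let $M_{\bar I}$ be the compactification of $M_I$ by $M$. If $M_I$ is stable (resp. direct, resp. inverse), then $M_{\bar I}$ is also stable (resp. direct, resp. inverse).
   Context: Let $(I,\le)$ be a non-empty directed preordered set and $\mathcal F(I)$ a family of subsets of $I$, each cofinal, closed under supersets and finite intersections, containing all non-empty upward closed subsets. A system $(M_I,\triangleright)$: pairwise disjoint sets $M_i$ ($i\in I$) with relations $\triangleright\subseteq M_{i'}\times M_i$ for $i\le i'$, reflexive for $i=i'$. $a_i\approx b_j$ iff some $c\in M_{i'}$, $i'\ge i,j$, has $c\triangleright a_i$, $c\triangleright b_j$. Prefactor system: $a_{i'}\approx a_i\iff a_{i'}\triangleright a_i$ for $i\le i'$. Stable: $a_{i'}\triangleright a_i\approx b_i$ implies $a_{i'}\triangleright b_i$. $\approx$-embeddings: $\approx$-preserving $emb_{i,i'}:M_i\to M_{i'}$ with $emb_{i,i}(a)\approx a$, $emb_{i',i''}\circ emb_{i,i'}(a)\approx emb_{i,i''}(a)$, coherent if $a_{i'}\triangleright a_i\Rightarrow emb_{i',i''}(a_{i'})\triangleright a_i$. $\approx$-projections: $\approx$-preserving $proj_{i',i}:M_{i'}\to M_i$ with $proj_{i,i}(a)\approx a$, $proj_{i',i}\circ proj_{i'',i'}(a)\approx proj_{i'',i}(a)$, coherent if $a_{i''}\triangleright a_i\Rightarrow proj_{i'',i'}(a_{i''})\triangleright a_i$. Direct: coherent embeddings with $a_{i'}\triangleright a_i\iff a_{i'}\approx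 emb_{i,i'}(a_i)$. Inverse: coherent projections with $a_{i'}\triangleright a_i\iff proj_{i',i}(a_{i'})\approx a_i$. A target for $M_I$ is a set $M$ with a relation $a\triangleright a_i$ ($a\in M$, $a_i\in M_i$) such that $\{i\mid\exists a_i\in M_i,\ a\triangleright a_i\}\in\mathcal F(I)$ for all $a\in M$ and $a\triangleright a_{i'}$, $a\triangleright a_i$ imply $a_{i'}\triangleright a_i$; when $M_I$ carries embeddings/projections, the target also carries maps $Emb_i:M_i\to M$ / $Proj_i:M\to M_i$ extending the structure. The compactification $M_{\bar I}$ has index set $\bar I=I\cup\{top\}$ ($top$ greatest), $M_{top}=M$, relation on $M\times M$ equality, $emb_{i,top}=Emb_i$, $proj_{top,i}=Proj_i$. A limit of $M_I$ is a target $M$ such that for every target $N$ of $M_I$ there is a unique map $\Phi:N\to M$ with $b\triangleright a_i\Rightarrow\Phi(b)\triangleright a_i$; equivalently a target that is maximal (each $Ext(a)=\{a_i\mid a\triangleright a_i\}$ is an inclusion-maximal consistent set), extensional ($Ext(a)\sim Ext(b)$, i.e. all elements of $Ext(a)\cup Ext(b)$ pairwise $\approx$, implies $a=b$) and complete (every consistent set $\alpha$ has some $a\in M$ with $Ext(a)\sim\alpha$), where a consistent set is $\alpha\subseteq\bigcup_iM_i$ with elements pairwise related by $\triangleright$ (higher stage to lower) and $\{i\mid\alpha\cap M_i\ne\emptyset\}\in\mathcal F(I)$. *)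

Section Systems.

Context {I : Type} (le : I -> I -> Prop).

Definition directed_preorder : Prop :=
  (forall i, le i i) /\
  (forall i j k, le i j -> le j k -> le i k) /\
  inhabited I /\
  (forall i j, exists k, le i k /\ le j k).

Definition cofinal (A : I -> Prop) : Prop :=
  forall i, exists j, le i j /\ A j.

Definition upward_closed (A : I -> Prop) : Prop :=
  forall i j, le i j -> A i -> A j.

Definition admissible_family (F : (I -> Prop) -> Prop) : Prop :=
  (forall A, F A -> cofinal A) /\
  (forall A B : I -> Prop, F A -> (forall i, A i -> B i) -> F B) /\
  (forall A B, F A -> F B -> F (fun i => A i /\ B i)) /\
  (forall A, (exists i, A i) -> upward_closed A -> F A).

Context {M : I -> Type}.
(** [R i j b a] : b in M_j  |>  a in M_i  (only allowed when i <= j) *)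
Context (R : forall i j : I, M j -> M i -> Prop).

Definition is_system : Prop :=
  (forall i j (b : M j) (a : M i), R i j b a -> le i j) /\
  (forall i (a : M i), R i i a a).

Definition approx {i j : I} (a : M i) (b : M j) : Prop :=
  exists (k : I) (c : M k), le i k /\ le j k /\ R i k c a /\ R j k c b.

Definition prefactor : Prop :=
  forall i i', le i i' -> forall (a' : M i') (a : M i), approx a' a <-> R i i' a' a.

Definition stable : Prop :=
  forall i i' (a' : M i') (a b : M i),
    le i i' -> R i i' a' a -> approx a b -> R i i' a' b.

Definition approx_embeddings (emb : forall i i', le i i' -> M i -> M i') : Prop :=
  (forall i i' (h : le i i') (a b : M i), approx a b -> approx (emb i i' h a) (emb i i' h b)) /\
  (forall i (h : le i i) (a : M i), approx (emb i i h a) a) /\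
  (forall i i' i'' (h1 : le i i') (h2 : le i' i'') (h3 : le i i'') (a : M i),
      approx (emb i' i'' h2 (emb i i' h1 a)) (emb i i'' h3 a)).

Definition coherent_emb (emb : forall i i', le i i' -> M i -> M i') : Prop :=
  forall i i' i'' (h2 : le i' i'') (a' : M i') (a : M i),
    le i i' -> R i i' a' a -> R i i'' (emb i' i'' h2 a') a.

Definition direct (emb : forall i i', le i i' -> M i -> M i') : Prop :=
  approx_embeddings emb /\ coherent_emb emb /\
  (forall i i' (h : le i i') (a' : M i') (a : M i),
      R i i' a' a <-> approx a' (emb i i' h a)).

Definition approx_projections (proj : forall i' i, le i i' -> M i' -> M i) : Prop :=
  (forall i i' (h : le i i') (a b : M i'), approx a b -> approx (proj i' i h a) (proj i' i h b)) /\
  (forall i (h : le i i) (a : M i), approx (proj i i h a) a) /\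
  (forall i i' i'' (h1 : le i i') (h2 : le i' i'') (h3 : le i i'') (a : M i''),
      approx (proj i' i h1 (proj i'' i' h2 a)) (proj i'' i h3 a)).

Definition coherent_proj (proj : forall i' i, le i i' -> M i' -> M i) : Prop :=
  forall i i' i'' (h1 : le i i') (h2 : le i' i'') (a'' : M i'') (a : M i),
    R i i'' a'' a -> R i i' (proj i'' i' h2 a'') a.

Definition inverse (proj : forall i' i, le i i' -> M i' -> M i) : Prop :=
  approx_projections proj /\ coherent_proj proj /\
  (forall i i' (h : le i i') (a' : M i') (a : M i),
      R i i' a' a <-> approx (proj i' i h a') a).

Definition is_target (F : (I -> Prop) -> Prop) (N : Type)
    (S : forall i, N -> M i -> Prop) : Prop :=
  (forall b : N, F (fun i => exists x : M i, S i b x)) /\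
  (forall (b : N) i i' (x' : M i') (x : M i),
      le i i' -> S i' b x' -> S i b x -> R i i' x' x).

Definition is_limit (F : (I -> Prop) -> Prop) (M0 : Type)
    (T : forall i, M0 -> M i -> Prop) : Prop :=
  is_target F M0 T /\
  forall (N : Type) (S : forall i, N -> M i -> Prop), is_target F N S ->
    exists Phi : N -> M0,
      (forall b i x, S i b x -> T i (Phi b) x) /\
      (forall Psi : N -> M0, (forall b i x, S i b x -> T i (Psi b) x) ->
         forall b, Psi b = Phi b).

End Systems.

(** The compactification M_{\bar I}: index set option I, None = top. *)
Definition cle {I : Type} (le : I -> I -> Prop) (x y : option I) : Prop :=
  match x, y with
  | Some i, Some j => le i j
  | _, None => True
  | None, Some _ => False
  end.

Definition cM {I : Type} (M : I -> Type) (M0 : Type) (x : option I) : Type :=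
  match x with Some i => M i | None => M0 end.

Definition cR {I : Type} {M : I -> Type} {M0 : Type}
    (R : forall i j : I, M j -> M i -> Prop) (T : forall i, M0 -> M i -> Prop)
    (x y : option I) : cM M M0 y -> cM M M0 x -> Prop :=
  match x, y return cM M M0 y -> cM M M0 x -> Prop with
  | Some i, Some j => R i j
  | Some i, None => T i
  | None, None => fun b a => b = a
  | None, Some _ => fun _ _ => False
  end.

Definition cemb {I : Type} {le : I -> I -> Prop} {M : I -> Type} {M0 : Type}
    (emb : forall i i', le i i' -> M i -> M i') (Emb : forall i, M i -> M0)
    (x y : option I) : cle le x y -> cM M M0 x -> cM M M0 y :=
  match x, y return cle le x y -> cM M M0 x -> cM M M0 y with
  | Some i, Some j => fun h => emb i j h
  | Some i, None => fun _ => Emb i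
  | None, None => fun _ a => a
  | None, Some _ => fun h => False_rect _ h
  end.

Definition cproj {I : Type} {le : I -> I -> Prop} {M : I -> Type} {M0 : Type}
    (proj : forall i' i, le i i' -> M i' -> M i) (Proj : forall i, M0 -> M i)
    (x' x : option I) : cle le x x' -> cM M M0 x' -> cM M M0 x :=
  match x', x return cle le x x' -> cM M M0 x' -> cM M M0 x with
  | Some i', Some i => fun h => proj i' i h
  | None, Some i => fun _ => Proj i
  | None, None => fun _ a => a
  | Some _, None => fun h => False_rect _ h
  end.

Definition target_embeddings {I : Type} (le : I -> I -> Prop) {M : I -> Type} {M0 : Type}
    (R : forall i j : I, M j -> M i -> Prop) (T : forall i, M0 -> M i -> Prop)
    (emb : forall i i', le i i' -> M i -> M i') (Emb : forall i, M i -> M0) : Prop :=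
  approx_embeddings (cle le) (cR R T) (cemb emb Emb) /\
  coherent_emb (cle le) (cR R T) (cemb emb Emb).

Definition target_projections {I : Type} (le : I -> I -> Prop) {M : I -> Type} {M0 : Type}
    (R : forall i j : I, M j -> M i -> Prop) (T : forall i, M0 -> M i -> Prop)
    (proj : forall i' i, le i i' -> M i' -> M i) (Proj : forall i, M0 -> M i) : Prop :=
  approx_projections (cle le) (cR R T) (cproj proj Proj) /\
  coherent_proj (cle le) (cR R T) (cproj proj Proj).

(* A limit is maximal, extensional and complete.  Maximality lets a relation
   a' |> b with a' at the top be checked against the components of a' at the
   finite stages above that of b, where stability, respectively the axioms of
   an inverse system, of M_I apply; approximation between finite stages is the
   same in the compactification as in M_I, since a common upper bound at the
   top can be replaced by one of its components.  For a direct system, a' |> a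
   forces a' = Emb_i a by extensionality: pushing a and a component of a' to a
   common stage and then to the top shows that a' and Emb_i a have the same
   components. *)

From Stdlib Require Import Setoid.

Section Compactification.

Variables (I : Type) (le : I -> I -> Prop) (F : (I -> Prop) -> Prop).
Variables (M : I -> Type) (R : forall i j : I, M j -> M i -> Prop).
Variables (M0 : Type) (T : forall i, M0 -> M i -> Prop).

Hypothesis Hdir : directed_preorder le.
Hypothesis Hadm : admissible_family le F.
Hypothesis Hsys : is_system le R.
Hypothesis Hpre : prefactor le R.
Hypothesis Hlim : is_limit le R F M0 T.

Local Notation capprox x y a b :=
  (@approx (option I) (cle le) (cM M M0) (cR R T) x y a b).

Lemma approx_sym i j (a : M i) (b : M j) : approx le R a b -> approx le R b a.
Proof. intros [k [c H]]. exists k, c. tauto. Qed.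

Lemma approx_trans_stage i (a b c : M i) :
  approx le R a b -> approx le R b c -> approx le R a c.
Proof.
  destruct Hdir as [le_refl _].
  intros Hab Hbc.
  assert (Rba : R i i b a) by (apply Hpre; [apply le_refl | apply approx_sym; exact Hab]).
  assert (Rbc : R i i b c) by (apply Hpre; [apply le_refl | exact Hbc]).
  exists i, b. auto.
Qed.

Lemma capprox_Some i j (a : M i) (b : M j) :
  capprox (Some i) (Some j) a b <-> approx le R a b.
Proof.
  destruct Hdir as [_ [le_trans [_ le_directed]]].
  destruct Hadm as [F_cofinal _].
  destruct Hlim as [[T_support T_coherent] _].
  split.
  - intros [[k|] [c [hik [hjk [Rca Rcb]]]]]; simpl in *.
    + exists k, c. auto.
    + (* c is a limit point: descend to one of its components above i and j *)
      destruct (le_directed i j) as [m [him hjm]].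
      destruct (F_cofinal _ (T_support c) m) as [k [hmk [x Tcx]]].
      exists k, x. repeat split; eauto.
  - intros [k [c H]]. exists (Some k), c. exact H.
Qed.

Lemma capprox_None (p q : M0) : capprox None None p q <-> p = q.
Proof.
  split.
  - intros [[k|] [c [_ [_ [Hp Hq]]]]]; simpl in *; [contradiction | congruence].
  - intros <-. exists None, p. simpl. tauto.
Qed.

Definition consistent (S : forall i, M i -> Prop) : Prop :=
  is_target le R F unit (fun i _ => S i).

Lemma limit_complete (S : forall i, M i -> Prop) :
  consistent S -> exists p, forall i x, S i x -> T i p x.
Proof.
  intros HS. destruct Hlim as [_ univ].
  destruct (univ unit (fun i _ => S i) HS) as [Phi [HPhi _]].
  exists (Phi tt). intros i x. exact (HPhi tt i x).
Qed.

Lemma limit_extensional (p q : M0) :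
  (forall i x, T i p x -> T i q x) -> p = q.
Proof.
  intros Hpq. destruct Hlim as [[T_support T_coherent] univ].
  assert (Hp : consistent (fun i x => T i p x)).
  { split; [intros _; apply T_support | intros _; apply T_coherent]. }
  destruct (univ unit _ Hp) as [Phi [_ Phi_unique]].
  rewrite (Phi_unique (fun _ => p) (fun _ _ _ H => H) tt).
  rewrite (Phi_unique (fun _ => q) (fun _ => Hpq) tt).
  reflexivity.
Qed.

Lemma limit_maximal (a' : M0) i (b : M i) :
  (forall k, le i k -> forall w, T k a' w -> R i k w b) -> T i a' b.
Proof.
  intros Hb.
  destruct Hdir as [_ [le_trans _]].
  destruct Hsys as [_ R_refl].
  destruct Hadm as [F_cofinal [F_superset _]].
  destruct Hlim as [[T_support T_coherent] _].
  set (S := fun j (x : M j) => T j a' x \/ exists e : i = j, x = eq_rect i M b j e).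
  assert (HS : consistent S).
  { split.
    - intros _. apply (F_superset _ _ (T_support a')).
      intros j [x Hx]. exists x. left. exact Hx.
    - intros _ j j' y x hjj' [Ty | [e ->]] [Tx | [e' ->]].
      + exact (T_coherent a' j j' y x hjj' Ty Tx).
      + destruct e'. exact (Hb j' hjj' y Ty).
      + (* b and x are both below a component of a' at a stage above i *)
        destruct e. simpl.
        destruct (F_cofinal _ (T_support a') i) as [m [him [u Tu]]].
        apply Hpre; [exact hjj' |].
        assert (hjm : le j m) by eauto.
        exists m, u. repeat split; auto.
        exact (T_coherent a' j m u x hjm Tu Tx).
      + destruct e, e'. apply R_refl. }
  destruct (limit_complete S HS) as [p Hp].
  assert (a'_p : a' = p).
  { apply limit_extensional. intros j x Tx. apply Hp. left. exact Tx. }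
  rewrite a'_p. apply Hp. right. exists eq_refl. reflexivity.
Qed.

Lemma stable_compactification : stable le R -> stable (cle le) (cR R T).
Proof.
  intros Hst x x' a' a b hxx' Ra' Hab.
  destruct Hlim as [[_ T_coherent] _].
  destruct x' as [i'|], x as [i|]; simpl in *.
  - apply capprox_Some in Hab. exact (Hst i i' a' a b hxx' Ra' Hab).
  - contradiction.
  - apply capprox_Some in Hab.
    apply limit_maximal. intros k hik w Tw.
    exact (Hst i k w a b hik (T_coherent a' i k w a hik Tw Ra') Hab).
  - apply capprox_None in Hab. congruence.
Qed.

Section Embeddings.

Variables (emb : forall i i', le i i' -> M i -> M i') (Emb : forall i, M i -> M0).

Hypothesis Hdirect : direct le R emb.
Hypothesis Htarget : target_embeddings le R T emb Emb.

Lemma limit_eq_Emb i (a' : M0) (a : M i) : T i a' a -> a' = Emb i a.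
Proof.
  intros Ta'.
  destruct Hdir as [_ [le_trans [_ le_directed]]].
  destruct Hadm as [F_cofinal _].
  destruct Hlim as [[T_support T_coherent] _].
  destruct Hdirect as [_ [_ R_iff_approx_emb]].
  destruct Htarget as [[Emb_approx [_ Emb_comp]] Emb_coherent].
  apply limit_extensional. intros j x Tx.
  destruct (le_directed i j) as [m0 [him0 hjm0]].
  destruct (F_cofinal _ (T_support a') m0) as [m [hm0m [v Tv]]].
  assert (him : le i m) by eauto.
  assert (hjm : le j m) by eauto.
  assert (v_emb : approx le R v (emb i m him a)).
  { apply R_iff_approx_emb. exact (T_coherent a' i m v a him Tv Ta'). }
  assert (Emb_v : Emb m v = Emb m (emb i m him a)).
  { apply capprox_None.
    exact (Emb_approx (Some m) None Logic.I v _ (proj2 (capprox_Some _ _ _ _) v_emb)). }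
  assert (Emb_emb : Emb m (emb i m him a) = Emb i a).
  { apply capprox_None.
    exact (Emb_comp (Some i) (Some m) None him Logic.I Logic.I a). }
  rewrite <- Emb_emb, <- Emb_v.
  exact (Emb_coherent (Some j) (Some m) None Logic.I v x hjm
           (T_coherent a' j m v x hjm Tv Tx)).
Qed.

Lemma direct_compactification : direct (cle le) (cR R T) (cemb emb Emb).
Proof.
  destruct Hdir as [le_refl _].
  destruct Hsys as [_ R_refl].
  destruct Hdirect as [_ [_ R_iff_approx_emb]].
  destruct Htarget as [Emb_approx Emb_coherent].
  split; [exact Emb_approx | split; [exact Emb_coherent |]].
  intros [i|] [i'|] h a' a; simpl in *.
  - rewrite capprox_Some. apply R_iff_approx_emb.
  - rewrite capprox_None. split; [apply limit_eq_Emb |].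
    intros ->. exact (Emb_coherent (Some i) (Some i) None Logic.I a a (le_refl i) (R_refl i a)).
  - contradiction.
  - rewrite capprox_None. tauto.
Qed.

End Embeddings.

Section Projections.

Variables (proj : forall i' i, le i i' -> M i' -> M i) (Proj : forall i, M0 -> M i).

Hypothesis Hinverse : inverse le R proj.
Hypothesis Htarget : target_projections le R T proj Proj.

Lemma limit_approx_Proj i (a' : M0) (a : M i) : T i a' a -> approx le R (Proj i a') a.
Proof.
  destruct Hdir as [le_refl _].
  destruct Htarget as [_ Proj_coherent].
  intros Ta'. apply Hpre; [apply le_refl |].
  exact (Proj_coherent (Some i) (Some i) None (le_refl i) Logic.I a' a Ta').
Qed.

Lemma inverse_compactification : inverse (cle le) (cR R T) (cproj proj Proj).
Proof.
  destruct Hinverse as [[proj_approx _] [_ R_iff_approx_proj]].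
  destruct Htarget as [Proj_approx Proj_coherent].
  split; [exact Proj_approx | split; [exact Proj_coherent |]].
  intros [i|] [i'|] h a' a; simpl in *.
  - rewrite capprox_Some. apply R_iff_approx_proj.
  - rewrite capprox_Some. split; [apply limit_approx_Proj |].
    intros Proj_a. apply limit_maximal. intros k hik w Tw.
    apply (R_iff_approx_proj i k hik).
    assert (proj_w : approx le R (proj k i hik (Proj k a')) (proj k i hik w)).
    { apply proj_approx, limit_approx_Proj. exact Tw. }
    assert (proj_Proj : approx le R (proj k i hik (Proj k a')) (Proj i a')).
    { apply capprox_Some.
      exact (proj2 (proj2 Proj_approx) (Some i) (Some k) None hik Logic.I Logic.I a'). }
    apply (approx_trans_stage _ _ _ _ (approx_sym _ _ _ _ proj_w)).
    exact (approx_trans_stage _ _ _ _ proj_Proj Proj_a).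
  - contradiction.
  - rewrite capprox_None. tauto.
Qed.

End Projections.

End Compactification.

Theorem corollary2p12 (I : Type) (le : I -> I -> Prop) (F : (I -> Prop) -> Prop)
    (M : I -> Type) (R : forall i j : I, M j -> M i -> Prop)
    (M0 : Type) (T : forall i, M0 -> M i -> Prop) :
  directed_preorder le -> admissible_family le F ->
  is_system le R -> prefactor le R -> is_limit le R F M0 T ->
  (stable le R -> stable (cle le) (cR R T)) /\
  (forall (emb : forall i i', le i i' -> M i -> M i') (Emb : forall i, M i -> M0),
      direct le R emb -> target_embeddings le R T emb Emb ->
      direct (cle le) (cR R T) (cemb emb Emb)) /\
  (forall (proj : forall i' i, le i i' -> M i' -> M i) (Proj : forall i, M0 -> M i),
      inverse le R proj -> target_projections le R T proj Proj ->
      inverse (cle le) (cR R T) (cproj proj Proj)).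
Proof.
  intros Hdir Hadm Hsys Hpre Hlim.
  split; [| split].
  - exact (stable_compactification I le F M R M0 T Hdir Hadm Hsys Hpre Hlim).
  - intros emb Emb.
    exact (direct_compactification I le F M R M0 T Hdir Hadm Hsys Hlim emb Emb).
  - intros proj Proj.
    exact (inverse_compactification I le F M R M0 T Hdir Hadm Hsys Hpre Hlim proj Proj).
Qed.
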